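(* Let $k$ be an integer. If a graph $T$ is a maximum $\mathsf{TJ}_k$-graph, then for every integer $n \geq k$, $T$ is a maximum $\mathsf{TJ}_n$-graph.
   Context: Graphs are finite, simple, undirected. $\mathsf{TJ}_k(G)$ is the graph on the cliques of $G$ of size $k$ where $C, C'$ are adjacent iff $|C \setminus C'| = |C' \setminus C| = 1$. A graph $T$ is a $\mathsf{TJ}_k$-graph if $T \cong \mathsf{TJ}_k(G)$ for some graph $G$, and a maximum $\mathsf{TJ}_k$-graph if $T \cong \mathsf{TJ}_k(G)$ for some graph $G$ with $\omega(G) = k$, where $\omega(G)$ is the maximum clique size of $G$. *)

From mathcomp Require Import all_boot.
Set Implicit Arguments. Unset Strict Implicit. Unset Printing Implicit Defensive.

Record sgraph := SGraph {
  vert :> finType;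
  adj : rel vert;
  adj_sym : symmetric adj;
  adj_irr : irreflexive adj }.

Definition is_clique (G : sgraph) (C : {set G}) : bool :=
  [forall x in C, forall y in C, (x != y) ==> adj x y].

Definition clique_number (G : sgraph) : nat :=
  \max_(C : {set G} | is_clique C) #|C|.

Definition kclique (G : sgraph) (k : nat) :=
  {C : {set G} | is_clique C && (#|C| == k)}.

Definition tj_adj (G : sgraph) (k : nat) : rel (kclique G k) :=
  fun C D => (#|val C :\: val D| == 1) && (#|val D :\: val C| == 1).

Lemma tj_adj_sym (G : sgraph) (k : nat) : symmetric (@tj_adj G k).
Proof. by move=> C D; rewrite /tj_adj andbC. Qed.

Lemma tj_adj_irr (G : sgraph) (k : nat) : irreflexive (@tj_adj G k).
Proof. by move=> C; rewrite /tj_adj setDv cards0. Qed.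

Definition TJ (k : nat) (G : sgraph) : sgraph :=
  @SGraph (kclique G k) (@tj_adj G k) (@tj_adj_sym G k) (@tj_adj_irr G k).

Definition isomorphic (G H : sgraph) : Prop :=
  exists f : G -> H, bijective f /\ forall x y, adj (f x) (f y) = adj x y.

Definition max_TJ_graph (k : nat) (T : sgraph) : Prop :=
  exists G : sgraph, clique_number G = k /\ isomorphic T (TJ k G).

From mathcomp Require Import all_boot.
Set Implicit Arguments. Unset Strict Implicit. Unset Printing Implicit Defensive.

(* Adding a vertex adjacent to everything (the cone over G) raises the clique
   number by one, and when omega(G) = k every (k+1)-clique of the cone contains
   the apex.  Hence C |-> apex + C is an isomorphism from TJ_k(G) onto
   TJ_(k+1)(cone G), and induction on n - k gives the theorem. *)

Lemma cliqueP (G : sgraph) (C : {set G}) :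
  reflect {in C &, forall x y, x != y -> adj x y} (is_clique C).
Proof.
apply: (iffP forallP) => [cC x y xC yC | cC x].
  by move: (cC x) => /implyP/(_ xC)/forallP/(_ y)/implyP/(_ yC)/implyP.
by apply/implyP => xC; apply/forallP => y; apply/implyP => yC; apply/implyP/cC.
Qed.

Lemma clique_number_max (G : sgraph) (C : {set G}) :
  is_clique C -> #|C| <= clique_number G.
Proof. exact: (leq_bigmax_cond (P := @is_clique G)). Qed.

Lemma clique_number_witness (G : sgraph) :
  exists2 C : {set G}, is_clique C & #|C| = clique_number G.
Proof.
have set0_clique : is_clique (set0 : {set G}) by apply/cliqueP => x y; rewrite inE.
have [|C cC maxC] := eq_bigmax_cond (A := @is_clique G) (fun C => #|C|).
  by apply/card_gt0P; exists set0.
by exists C; last exact: esym maxC.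
Qed.

Lemma isomorphic_trans (G H K : sgraph) :
  isomorphic G H -> isomorphic H K -> isomorphic G K.
Proof.
move=> [f [f_bij f_adj]] [g [g_bij g_adj]].
by exists (g \o f); split=> [|x y]; [exact: bij_comp | rewrite /= g_adj f_adj].
Qed.

Section Cone.
Variable G : sgraph.

Definition cone_adj : rel (option G) := fun x y =>
  match x, y with
  | Some a, Some b => adj a b
  | None, None => false
  | _, _ => true
  end.

Lemma cone_adj_sym : symmetric cone_adj.
Proof. by case=> [a|] [b|] //=; rewrite adj_sym. Qed.

Lemma cone_adj_irr : irreflexive cone_adj.
Proof. by case=> [a|] //=; rewrite adj_irr. Qed.

Definition cone : sgraph := SGraph cone_adj_sym cone_adj_irr.

Definition cone_of (C : {set G}) : {set cone} := None |: [set Some x | x in C].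

Definition base (D : {set cone}) : {set G} := [set x | (Some x : cone) \in D].

Lemma mem_cone_of (C : {set G}) x : ((Some x : cone) \in cone_of C) = (x \in C).
Proof. by rewrite !inE (mem_imset _ _ Some_inj). Qed.

Lemma apex_cone_of (C : {set G}) : (None : cone) \in cone_of C.
Proof. exact: setU11. Qed.

Lemma apex_notin_imset (C : {set G}) : (None : cone) \notin [set Some x | x in C].
Proof. by apply/imsetP => -[]. Qed.

Lemma card_cone_of (C : {set G}) : #|cone_of C| = #|C|.+1.
Proof. by rewrite cardsU1 apex_notin_imset card_imset //; exact: Some_inj. Qed.

Lemma cone_ofD (A B : {set G}) :
  cone_of A :\: cone_of B = [set Some x | x in A :\: B].
Proof.
apply/setP=> -[x|]; first by rewrite in_setD !mem_cone_of (mem_imset _ _ Some_inj) in_setD.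
by rewrite in_setD apex_cone_of (negbTE (apex_notin_imset _)).
Qed.

Lemma cone_of_base (D : {set cone}) : (None : cone) \in D -> cone_of (base D) = D.
Proof.
by move=> apexD; apply/setP => -[x|]; rewrite ?mem_cone_of ?inE // apex_cone_of.
Qed.

Lemma cone_of_clique (C : {set G}) : is_clique C -> is_clique (cone_of C).
Proof.
move/cliqueP => cC; apply/cliqueP => -[x|] [y|] //; rewrite !mem_cone_of => xC yC.
by rewrite inj_eq; [exact: cC | exact: Some_inj].
Qed.

Lemma base_clique (D : {set cone}) : is_clique D -> is_clique (base D).
Proof.
move/cliqueP => cD; apply/cliqueP => x y; rewrite !inE => xD yD xy.
by apply: (cD _ _ xD yD); rewrite inj_eq //; exact: Some_inj.
Qed.

Lemma card_base (D : {set cone}) : #|D| <= #|base D|.+1.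
Proof.
rewrite -card_cone_of subset_leq_card //.
by apply/subsetP => -[x|] xD; rewrite ?apex_cone_of // mem_cone_of inE.
Qed.

Lemma card_base_apexF (D : {set cone}) : (None : cone) \notin D -> #|D| <= #|base D|.
Proof.
move=> apexD; rewrite -(card_imset (base D) Some_inj) subset_leq_card //.
apply/subsetP => -[x|] xD; last by rewrite xD in apexD.
by rewrite (mem_imset _ _ Some_inj) inE.
Qed.

Lemma clique_number_cone : clique_number cone = (clique_number G).+1.
Proof.
apply/eqP; rewrite eqn_leq; apply/andP; split.
  apply/bigmax_leqP => D /base_clique /clique_number_max.
  by rewrite -ltnS; exact: leq_trans (card_base D).
have [C cC <-] := clique_number_witness G.
by rewrite -card_cone_of clique_number_max // cone_of_clique.
Qed.

Variable k : nat.
Hypothesis omegaG : clique_number G = k.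

(* A (k+1)-clique avoiding the apex would be a (k+1)-clique of G. *)
Lemma apex_in_clique (D : {set cone}) :
  is_clique D -> #|D| = k.+1 -> (None : cone) \in D.
Proof.
move=> /base_clique /clique_number_max; rewrite omegaG => baseD sizeD.
apply: contraT => /card_base_apexF; rewrite sizeD.
by move/leq_trans/(_ baseD); rewrite ltnn.
Qed.

Lemma cone_of_kclique_proof (C : kclique G k) :
  is_clique (cone_of (val C)) && (#|cone_of (val C)| == k.+1).
Proof. by case/andP: (valP C) => cC sizeC; rewrite cone_of_clique // card_cone_of. Qed.

Definition cone_of_kclique (C : kclique G k) : kclique cone k.+1 :=
  Sub (cone_of (val C)) (cone_of_kclique_proof C).

Lemma cone_of_kclique_inj : injective cone_of_kclique.
Proof.
move=> C D /(congr1 val) /= eqCD; apply/val_inj/setP => x.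
by rewrite -!mem_cone_of eqCD.
Qed.

Lemma cone_of_kclique_onto (D : kclique cone k.+1) : D \in codom cone_of_kclique.
Proof.
case/andP: (valP D) => cD /eqP sizeD.
have apexD := apex_in_clique cD sizeD.
have baseD : is_clique (base (val D)) && (#|base (val D)| == k).
  by rewrite base_clique //= -eqSS -card_cone_of cone_of_base // sizeD.
apply/codomP; exists (Sub (base (val D)) baseD).
by apply: val_inj; rewrite /= cone_of_base.
Qed.

Lemma TJ_cone : isomorphic (TJ k G) (TJ k.+1 cone).
Proof.
exists cone_of_kclique; split=> [|C D].
  apply: inj_card_bij; first exact: cone_of_kclique_inj.
  rewrite -(card_codom cone_of_kclique_inj) subset_leq_card //.
  by apply/subsetP => D _; exact: cone_of_kclique_onto.
by rewrite /= /tj_adj /= !cone_ofD !card_imset //; exact: Some_inj.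
Qed.

End Cone.

Lemma max_TJ_graphS (k : nat) (T : sgraph) :
  max_TJ_graph k T -> max_TJ_graph k.+1 T.
Proof.
move=> [G [omegaG isoT]]; exists (cone G).
by rewrite clique_number_cone omegaG; split=> //; exact: isomorphic_trans (TJ_cone omegaG).
Qed.

Theorem proposition4p12 (k : nat) (T : sgraph) :
  max_TJ_graph k T -> forall n : nat, k <= n -> max_TJ_graph n T.
Proof.
move=> maxT n /subnKC <-; elim: (n - k) => [|m IHm]; first by rewrite addn0.
by rewrite addnS; exact: max_TJ_graphS.
Qed.
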